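(* Let $P\ll Q$ be probability measures, let $\gamma>1$, and let $f:(0,\infty)\to\mathbb R$ be convex with $f(1)=0$, differentiable at $1$ and at $\gamma$, with $f'(\gamma)>f'(1)$. Then $$E_\gamma(P\Vert Q)\le \frac{D_f(P\Vert Q)}{f'(\gamma)-f'(1)}.$$ If in addition $f$ is differentiable on $[\gamma,\infty)$ with $f'$ being $L$-Lipschitz on $[\gamma,\infty)$ for some $L>0$, and $\gamma_0:=\gamma+\sqrt{2\big(f(\gamma)-f'(1)(\gamma-1)\big)/L}$, then $$E_\gamma(P\Vert Q)\le \frac{D_f(P\Vert Q)}{f'(\gamma_0)-f'(1)}.$$
   Context: For convex $f$ on $(0,\infty)$ extended by $f(0):=\lim_{t\downarrow0}f(t)$ and $P\ll Q$, $D_f(P\Vert Q):=\int f(\mathrm dP/\mathrm dQ)\,\mathrm dQ$. The $E_\gamma$-divergence is $E_\gamma(P\Vert Q):=\int[\mathrm dP/\mathrm dQ-\gamma]_+\,\mathrm dQ$ with $[x]_+=\max\{x,0\}$. *)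

From HB Require Import structures.
From mathcomp Require Import all_boot all_order all_algebra.
From mathcomp Require Import all_classical all_reals all_analysis.
Set Implicit Arguments. Unset Strict Implicit. Unset Printing Implicit Defensive.
Import Order.TTheory GRing.Theory Num.Theory.
Import numFieldNormedType.Exports.
Local Open Scope classical_set_scope.
Local Open Scope ring_scope.
Local Open Scope charge_scope.

Section fdiv.
Context {d : measure_display} {T : measurableType d} {R : realType}.

(* Density dP/dQ (Radon-Nikodym derivative from the library), as a real
   function; it is finite everywhere when P << Q. *)
Definition dens (P Q : probability T R) : T -> R :=
  fun x => fine (('d (charge_of_finite_measure P) '/d Q) x).

(* f extended to [0,oo) by f(0) := lim_{t -> 0+} f t (possibly +oo);
   values at negative reals are irrelevant (a Q-null set). *)
Definition fext (f : R -> R) (r : R) : \bar R :=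
  if r <= 0 then lim ((fun t => (f t)%:E) @ 0^'+) else (f r)%:E.

Definition fdiv (f : R -> R) (P Q : probability T R) : \bar R :=
  (\int[Q]_x fext f (dens P Q x))%E.

Definition Egamma (gamma : R) (P Q : probability T R) : \bar R :=
  (\int[Q]_x (Num.max (dens P Q x - gamma) 0)%:E)%E.

End fdiv.

Definition convex_pos {R : realType} (f : R -> R) : Prop :=
  forall x y t : R, 0 < x -> 0 < y -> 0 <= t <= 1 ->
    f (t * x + (1 - t) * y) <= t * f x + (1 - t) * f y.

From HB Require Import structures.
From mathcomp Require Import all_boot all_order all_algebra.
From mathcomp Require Import all_classical all_reals all_analysis.
From mathcomp Require Import ring lra measurable_realfun.
Import Order.TTheory GRing.Theory Num.Theory.
Import numFieldNormedType.Exports.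
Local Open Scope classical_set_scope.
Local Open Scope ring_scope.

(* With c1 := f'(1), the gap g t := f t - c1 (t - 1) is nonnegative by
   convexity, and since E_Q[dP/dQ - 1] = 0 it integrates to D_f(P || Q).  The
   theorem thus reduces to a pointwise hinge bound c [t - gamma]_+ <= g t.  For
   c = f'(gamma) - f'(1) it is the tangent line of f at gamma.  For
   c = f'(gamma0) - f'(1), write gamma0 = gamma + del: the quadratic upper
   bound given by the L-Lipschitz derivative yields
   g gamma <= g gamma0 - g'(gamma0) del + L del^2 / 2, and del is chosen so
   that L del^2 / 2 = g gamma; hence g gamma0 >= g'(gamma0) del, and the
   tangent at gamma0 (resp. the same quadratic bound below gamma0) concludes. *)

Section derive1_slope.
Context {R : realType}.
Implicit Types (f : R -> R) (a s : R).

Lemma derive1_le_at_right f a s : derivable f a 1 ->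
  (\forall h \near 0^'+, (f (h + a) - f a) / h <= s) -> derive1 f a <= s.
Proof.
move=> fd slope; rewrite derive1E ['D_1 f a]cvg_at_rightE//.
apply: limr_le.
  rewrite -(cvg_at_rightE (fun h => h^-1 *: ((f \o shift a) _ - f a))) //.
  apply: cvg_trans fd; apply: cvg_app => A [e e0 Ae]; exists e => // x xe x0.
  by apply: Ae => //; exact/lt0r_neq0.
apply: filterS slope => h; rewrite /= [_%:A]mulr1 mulrC; exact.
Qed.

Lemma derive1_ge_at_left f a s : derivable f a 1 ->
  (\forall h \near 0^'-, s <= (f (h + a) - f a) / h) -> s <= derive1 f a.
Proof.
move=> fd slope; rewrite derive1E ['D_1 f a]cvg_at_leftE//.
apply: limr_ge.
  rewrite -(cvg_at_leftE (fun h => h^-1 *: ((f \o shift a) _ - f a))) //.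
  apply: cvg_trans fd; apply: cvg_app => A [e e0 Ae]; exists e => // x xe x0.
  by apply: Ae => //; exact/ltr0_neq0.
apply: filterS slope => h; rewrite /= [_%:A]mulr1 mulrC; exact.
Qed.
End derive1_slope.

Section convex_pos.
Context {R : realType} {f : R -> R} (cf : convex_pos f).

Lemma convex_pos_chord {x y z : R} : 0 < x -> x < y -> y < z ->
  (z - x) * f y <= (z - y) * f x + (y - x) * f z.
Proof.
move=> x0 xy yz; have zx : 0 < z - x by lra.
pose t := (z - y) / (z - x).
have t01 : 0 <= t <= 1.
  by apply/andP; split; rewrite /t ?divr_ge0 ?ler_pdivrMr //; lra.
have := @cf x z t x0 (_ : 0 < z) t01; have -> : t * x + (1 - t) * z = y.
  by rewrite /t; field; lra.
move=> /(_ ltac:(lra)) /(ler_wpM2l (ltW zx)).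
have -> // : (z - x) * (t * f x + (1 - t) * f z) =
  (z - y) * f x + (y - x) * f z.
by rewrite /t; field; lra.
Qed.

Lemma convex_pos_slope_leL {x y z : R} : 0 < x -> x < y -> y < z ->
  (f y - f x) / (y - x) <= (f z - f x) / (z - x).
Proof.
move=> x0 xy yz; have yx : 0 < y - x by lra.
have zx : 0 < z - x by lra.
rewrite ler_pdivrMr // mulrAC ler_pdivlMr //.
by have := convex_pos_chord x0 xy yz; lra.
Qed.

Lemma convex_pos_slope_leR {x y z : R} : 0 < x -> x < y -> y < z ->
  (f z - f x) / (z - x) <= (f z - f y) / (z - y).
Proof.
move=> x0 xy yz; have zy : 0 < z - y by lra.
have zx : 0 < z - x by lra.
rewrite ler_pdivrMr // mulrAC ler_pdivlMr //.
by have := convex_pos_chord x0 xy yz; lra.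
Qed.

Lemma convex_pos_tangent {a t : R} : 0 < a -> 0 < t -> derivable f a 1 ->
  f a + derive1 f a * (t - a) <= f t.
Proof.
move=> a0 t0 fd.
case: (ltgtP t a) => [lt_ta|lt_at|->]; last by rewrite subrr mulr0 addr0.
- have at_gt0 : 0 < a - t by lra.
  suff : (f a - f t) / (a - t) <= derive1 f a by rewrite ler_pdivrMr //; nra.
  apply: derive1_ge_at_left => //; near=> h.
  have h0 : h < 0 by near: h; exact: nbhs_left_lt.
  have ht : t - a < h by near: h; apply: nbhs_left_gt; lra.
  have -> : (f (h + a) - f a) / h = (f a - f (h + a)) / (a - (h + a)).
    by field; lra.
  by apply: convex_pos_slope_leR; lra.
- have ta_gt0 : 0 < t - a by lra.
  suff : derive1 f a <= (f t - f a) / (t - a) by rewrite ler_pdivlMr //; nra.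
  apply: derive1_le_at_right => //; near=> h.
  have h0 : 0 < h by near: h; exact: nbhs_right_gt.
  have ht : h < t - a by near: h; apply: nbhs_right_lt; lra.
  have -> : (f (h + a) - f a) / h = (f (h + a) - f a) / (h + a - a).
    by rewrite addrK.
  by apply: convex_pos_slope_leL; lra.
Unshelve. all: by end_near. Qed.

Lemma convex_pos_derive1_le {a b : R} : 0 < a -> a <= b ->
  derivable f a 1 -> derivable f b 1 -> derive1 f a <= derive1 f b.
Proof.
move=> a0 ab fa fb; have b0 : 0 < b by exact: lt_le_trans ab.
have := convex_pos_tangent a0 b0 fa; have := convex_pos_tangent b0 a0 fb.
case: (eqVneq a b) => [-> //|nab] h1 h2.
have lab : a < b by rewrite lt_neqAle nab.
have : 0 <= (derive1 f b - derive1 f a) * (b - a) by nra.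
by rewrite pmulr_lge0 ?subr_gt0 // subr_ge0.
Qed.

End convex_pos.

Section lipschitz_derive1.
Context {R : realType}.

Lemma is_derive_quadratic (d L x s : R) :
  is_derive s 1 ((d \*: id) + ((L / 2) \*: ((id - cst x) ^+ 2)))
    (d + L * (s - x)).
Proof.
apply: is_derive_eq.
rewrite /= expr1 subr0 /= [d%:A]mulr1 [(2 * _)%:A]mulr1 !fctE /=.
by rewrite -[(L / 2) *: _]/((L / 2) * _); field.
Qed.

Lemma lipschitz_derive1_le_quadratic {f : R -> R} {a L x y : R} :
  (forall s, a <= s -> derivable f s 1) ->
  (forall s u, a <= s -> a <= u ->
     `|derive1 f s - derive1 f u| <= L * `|s - u|) ->
  a <= y -> y <= x ->
  f y <= f x - derive1 f x * (x - y) + L / 2 * (x - y) ^+ 2.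
Proof.
move=> fd lip ay yx.
have [->|nyx] := eqVneq y x.
  by rewrite subrr mulr0 expr0n /= mulr0 subr0 addr0.
have ltyx : y < x by rewrite lt_neqAle nyx.
set d := derive1 f x.
pose k := f - ((d \*: id) + ((L / 2) \*: ((@id R - cst x) ^+ 2))).
have dk s : y <= s -> is_derive s 1 k (derive1 f s - (d + L * (s - x))).
  move=> ys; apply: is_deriveB; last exact: is_derive_quadratic.
  by rewrite derive1E; apply: derivableP; apply: fd; lra.
have ck : {within `[y, x], continuous k}.
  apply: derivable_within_continuous => s; rewrite in_itv /= => /andP[ys _].
  have dks := dk s ys; exact: ex_derive.
have dk' s : s \in `]y, x[ -> is_derive s 1 k (derive1 f s - (d + L * (s - x))).
  by rewrite in_itv /= => /andP[/ltW /dk].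
have [c] := MVT ltyx dk' ck; rewrite in_itv /= => /andP[yc cx] kE.
have dkc : 0 <= derive1 f c - (d + L * (c - x)).
  have := lip c x ltac:(lra) ltac:(lra).
  have cx0 : c - x <= 0 by lra.
  by rewrite (ler0_norm cx0) => /ler_normlP[]; rewrite /d; nra.
have : k y <= k x by rewrite -subr_ge0 kE mulr_ge0 // subr_ge0.
rewrite /k /= !fctE /= subrr expr0n /= scaler0 addr0 -![_ *: _]/(_ * _) !expr2.
by nra.
Qed.

End lipschitz_derive1.

Lemma half_mul_sqr_sqrt {R : rcfType} {a L : R} : 0 <= a -> 0 < L ->
  L / 2 * Num.sqrt (2 * a / L) ^+ 2 = a.
Proof.
move=> a0 L0; have a_div_ge0 : 0 <= 2 * a / L.
  by apply: divr_ge0; [exact: mulr_ge0|exact: ltW].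
by rewrite sqr_sqrtr //; field; exact: lt0r_neq0.
Qed.

Section monotone_measurable.
Context {R : realType}.

Lemma nondecreasing_in_measurable (D : set R) (g : R -> R) : is_interval D ->
  {in D &, {homo g : x y / x <= y}} -> measurable_fun D g.
Proof.
move=> iD g_nd; have mD := is_interval_measurable iD.
apply: (measurability (@RGenCInfty.G R)) => [|/= _ [_] [r] -> <-].
  exact: RGenCInfty.measurableE.
apply: is_interval_measurable => s t /= [Ds gs] [Dt gt] u /andP[su ut].
have Du : D u by apply: (iD s t) => //; rewrite su.
move: gs; rewrite /= !in_itv /= !andbT => gs.
by split => //; rewrite (le_trans gs) // g_nd ?inE.
Qed.

Lemma nonincreasing_in_measurable (D : set R) (g : R -> R) : is_interval D ->
  {in D &, {homo g : x y /~ x <= y}} -> measurable_fun D g.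
Proof.
move=> iD g_ni; rewrite -(opprK g); apply/measurable_funN.
by apply: nondecreasing_in_measurable => // s t Ds Dt st; rewrite /= lerN2 g_ni.
Qed.

End monotone_measurable.

Section tangent_gap.
Context {R : realType} {f : R -> R}.
Hypotheses (cf : convex_pos f) (f1 : f 1 = 0) (fd1 : derivable f 1 1).
Let c1 := derive1 f 1.
Let gap t := f t - c1 * (t - 1).

Lemma gap_ge0 {t : R} : 0 < t -> 0 <= gap t.
Proof.
move=> t0; have := convex_pos_tangent cf ltr01 t0 fd1.
by rewrite f1 add0r /gap subr_ge0.
Qed.

Lemma gap_nonincreasing x y : 0 < x -> x <= y -> y <= 1 -> gap y <= gap x.
Proof.
move=> x0 xy y1; have [->//|nxy] := eqVneq x y.
have ltxy : x < y by rewrite lt_neqAle nxy.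
have [->|ny1] := eqVneq y 1; first by rewrite /gap f1 subrr mulr0 subr0 gap_ge0.
have lty1 : y < 1 by rewrite lt_neqAle ny1.
have := convex_pos_chord cf x0 ltxy lty1.
by have := gap_ge0 (lt_trans x0 ltxy); rewrite /gap f1; nra.
Qed.

Lemma gap_nondecreasing x y : 1 <= x -> x <= y -> gap x <= gap y.
Proof.
move=> x1 xy; have [->//|nxy] := eqVneq x y.
have ltxy : x < y by rewrite lt_neqAle nxy.
have [<-|nx1] := eqVneq 1 x.
  rewrite {1}/gap f1 subrr mulr0 subr0 gap_ge0 //.
  exact: lt_le_trans ltr01 (le_trans x1 xy).
have lt1x : 1 < x by rewrite lt_neqAle nx1.
have := convex_pos_chord cf ltr01 lt1x ltxy.
by have := gap_ge0 (lt_trans ltr01 lt1x); rewrite /gap f1; nra.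
Qed.

Lemma hinge_le_gap c gam : 0 < gam ->
  (forall t, gam < t -> c * (t - gam) <= gap t) ->
  forall t, 0 < t -> c * Num.max (t - gam) 0 <= gap t.
Proof.
move=> gam0 hinge t t0; case: (leP (t - gam) 0) => tgam.
  by rewrite mulr0 gap_ge0.
by apply: hinge; lra.
Qed.

Lemma derive1_hinge_le_gap gam t : 0 < gam -> derivable f gam 1 -> gam < t ->
  (derive1 f gam - c1) * (t - gam) <= gap t.
Proof.
move=> gam0 fdg gamt.
have := convex_pos_tangent cf gam0 (lt_trans gam0 gamt) fdg.
by have := gap_ge0 gam0; rewrite /gap; lra.
Qed.

Lemma lipschitz_hinge_le_gap {gam L del t : R} :
  0 < gam -> 0 <= L -> 0 <= del ->
  L / 2 * del ^+ 2 = gap gam ->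
  (forall x, gam <= x -> derivable f x 1) ->
  (forall x y, gam <= x -> gam <= y ->
     `|derive1 f x - derive1 f y| <= L * `|x - y|) ->
  gam < t -> (derive1 f (gam + del) - c1) * (t - gam) <= gap t.
Proof.
move=> gam_gt0 L0 del0 Gdel fd lip gamt.
set gam0 := gam + del; set d0 := derive1 f gam0; set s := t - gam.
have gamgam0 : gam <= gam0 by rewrite /gam0 lerDl.
have [tgam0|gam0t] := leP t gam0.
- have quad := lipschitz_derive1_le_quadratic fd lip (lexx gam) (ltW gamt).
  have := lip t gam0 (ltW gamt) gamgam0.
  have tgam00 : t - gam0 <= 0 by lra.
  rewrite (ler0_norm tgam00) -/d0 => /ler_normlP[Ld _].
  have slope : 0 <= (derive1 f t - d0 + L * (del - s)) * s.
    have -> : del - s = - (t - gam0) by rewrite /s /gam0; ring.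
    by apply: mulr_ge0; rewrite /s; lra.
  have sq : 0 <= L / 2 * (del - s) ^+ 2 by rewrite mulr_ge0 ?sqr_ge0 ?divr_ge0.
  by move: Gdel quad slope sq; rewrite /gap /s; lra.
- have tangent := convex_pos_tangent cf (lt_le_trans gam_gt0 gamgam0)
    (lt_trans gam_gt0 gamt) (fd _ gamgam0).
  have quad := lipschitz_derive1_le_quadratic fd lip (lexx gam) gamgam0.
  have gam0E : gam0 = gam + del by [].
  by move: Gdel tangent quad; rewrite /gap /s -/d0 gam0E; lra.
Qed.

(* gap is monotone on ]0, 1] and on [1, +oo[, which gives measurability
   without any continuity argument. *)
Lemma measurable_fext : measurable_fun setT (fext f).
Proof.
have itv_measurable (i : interval R) : measurable ([set` i] : set R).
  by apply: is_interval_measurable; exact: interval_is_interval.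
have fextE t : 0 < t -> fext f t = (gap t + c1 * (t - 1))%:E.
  by move=> t0; rewrite /fext (lt_geF t0) /gap subrK.
have measurable_line (D : set R) : measurable_fun D (fun t => c1 * (t - 1)).
  by apply: measurable_funM => //; exact: measurable_funB.
have -> : [set: R] = `]-oo, 0] `|` (`]0, 1] `|` `]1, +oo[).
  apply/seteqP; split => x // _; rewrite /= !in_itv /= andbT.
  by case: (leP x 0) => x0; [left|right; case: (leP x 1) => x1; [left|right]].
apply/(measurable_funU _ (itv_measurable _)
  (measurableU _ _ (itv_measurable _) (itv_measurable _))); split.
  apply: (eq_measurable_fun (cst (fext f 0))) => [x|//].
  by rewrite inE /= in_itv /= => x0; rewrite /fext x0 lexx.
apply/(measurable_funU _ (itv_measurable _) (itv_measurable _)); split.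
- apply: (eq_measurable_fun (EFin \o (gap \+ fun t => c1 * (t - 1)))).
    by move=> x; rewrite inE /= in_itv /= => /andP[x0 _]; rewrite fextE.
  apply/measurable_EFinP/measurable_funD; last exact: measurable_line.
  apply: nonincreasing_in_measurable; first exact: interval_is_interval.
  move=> x y; rewrite !inE /= !in_itv /= => /andP[_ x1] /andP[y0 _] yx.
  exact: gap_nonincreasing.
- apply: (eq_measurable_fun (EFin \o (gap \+ fun t => c1 * (t - 1)))).
    move=> x; rewrite inE /= in_itv /= andbT => x1.
    by rewrite fextE // (lt_trans ltr01).
  apply/measurable_EFinP/measurable_funD; last exact: measurable_line.
  apply: nondecreasing_in_measurable; first exact: interval_is_interval.
  move=> x y; rewrite !inE /= !in_itv /= !andbT => x1 _ xy.
  exact: gap_nondecreasing (ltW x1) xy.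
Qed.

Lemma fext0_ge : ((- c1)%:E <= fext f 0)%E.
Proof.
rewrite /fext lexx.
have gap_cvg : cvg ((gap t)%:E @[t --> 0^'+]).
  apply: nonincreasing_at_right_is_cvge; near=> x => a b.
  rewrite !in_itv /= => /andP[a0 ax] /andP[b0 bx] ab.
  have x1 : x < 1 by near: x; exact: nbhs_right_lt.
  by rewrite lee_fin gap_nonincreasing // ltW // (lt_trans bx).
have line_cvg : (c1 * (t - 1))%:E @[t --> 0^'+] --> (c1 * (0 - 1))%:E.
  apply: cvg_EFin; first by near=> t.
  apply: cvg_at_right_filter; apply: cvgM; first exact: cvg_cst.
  by apply: cvgB; [exact: cvg_id|exact: cvg_cst].
have -> : (fun t => (f t)%:E) = (fun t => (gap t)%:E + (c1 * (t - 1))%:E)%E.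
  by apply/funext => t; rewrite -EFinD /gap subrK.
rewrite limeD //; last by rewrite (cvg_lim _ line_cvg) // fin_num_adde_defl.
  rewrite (cvg_lim _ line_cvg) // sub0r mulrN1 -[X in (X <= _)%E]add0e leeD2r //.
  apply: lime_ge => //; near=> t; rewrite lee_fin; apply: gap_ge0.
  by near: t; exact: nbhs_right_gt.
by apply/cvg_ex; eexists; exact: line_cvg.
Unshelve. all: by end_near. Qed.

Lemma fext_hinge_le {c gam : R} : 0 < gam ->
  (forall t, gam < t -> c * (t - gam) <= gap t) ->
  forall t, 0 <= t ->
  ((c * Num.max (t - gam) 0)%:E <= fext f t - (c1 * (t - 1))%:E)%E.
Proof.
move=> gam0 hinge t; rewrite le_eqVlt => /orP[/eqP <-|t0].
  have -> : Num.max (0 - gam) 0 = 0 by apply: max_r; lra.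
  rewrite mulr0 sub0r mulrN1 EFinN.
  have := fext0_ge; case: (fext f 0) => [r| |] //.
  - by rewrite -EFinN -EFinB !lee_fin; lra.
  - by rewrite -EFinN addye ?leey.
by rewrite /fext (lt_geF t0) -EFinD lee_fin -/(gap t) hinge_le_gap.
Qed.

End tangent_gap.

Section integralD_integrable.
Context {d : measure_display} {T : measurableType d} {R : realType}.
Variable mu : {measure set T -> \bar R}.
Local Open Scope ereal_scope.

(* Unlike integralD, K need not be integrable: then both sides are +oo. *)
Lemma ge0_integralD_integrable (K : T -> \bar R) (G : T -> R) :
  measurable_fun setT K -> (forall x, 0 <= K x) ->
  mu.-integrable setT (EFin \o G) ->
  \int[mu]_x (K x + (G x)%:E) = \int[mu]_x K x + \int[mu]_x (G x)%:E.
Proof.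
move=> mK K0 iG; have [iK|niK] := pselect (mu.-integrable setT K).
  by rewrite integralD.
have Koo : \int[mu]_x K x = +oo.
  apply/eqP; rewrite eq_le leey /= leNgt; apply/negP => Kfin; apply: niK.
  apply/integrableP; split => //.
  by under eq_integral => x _ do rewrite gee0_abs//.
have Gfin := integrable_fin_num measurableT iG.
rewrite Koo addye; last by move: Gfin; case: (\int[mu]_x (G x)%:E).
have mG : measurable_fun setT (EFin \o G) by exact: measurable_int iG.
set S := fun x => K x + (G x)%:E.
have mS : measurable_fun setT S by exact: emeasurable_funD.
have iGn : \int[mu]_x (EFin \o G)^\- x < +oo :=
  integral_funeneg_lt_pinfty measurableT iG.
have Spos : \int[mu]_x S^\+ x = +oo.
  have : \int[mu]_x K x <= \int[mu]_x (S^\+ x + (EFin \o G)^\- x).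
    apply: ge0_le_integral => //.
    - by apply: emeasurable_funD; [exact: measurable_funepos|exact: measurable_funeneg].
    - move=> x _; rewrite funeposE funenegE /S.
      apply: (@le_trans _ _ (K x + (G x)%:E + (- (G x)%:E))); first by rewrite addeK.
      by apply: leeD; rewrite le_max lexx.
  rewrite ge0_integralD //; [|exact: measurable_funepos|exact: measurable_funeneg].
  rewrite Koo leye_eq => /eqP Soo; apply/eqP; rewrite eq_le leey /= leNgt.
  by apply/negP => Sfin; have := lte_add_pinfty Sfin iGn; rewrite Soo ltxx.
have Sneg : \int[mu]_x S^\- x < +oo.
  apply: le_lt_trans iGn; apply: ge0_le_integral => //.
  - exact: measurable_funeneg.
  - exact: measurable_funeneg.
  - move=> x _; rewrite !funenegE /S ge_max; apply/andP; split.
      by rewrite le_max leeN2 leeDr.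
    by rewrite le_max lexx orbT.
rewrite integralE Spos addye //.
by rewrite eqe_oppLR /=; apply/negbT/lt_eqF.
Qed.

End integralD_integrable.

Section hinge_integral.
Context {d : measure_display} {T : measurableType d} {R : realType}.
Variable Q : probability T R.
Local Open Scope ereal_scope.

Lemma hinge_integral_le (u : T -> R) (h : R -> \bar R) (gam c c1 : R) :
  measurable_fun setT u -> (forall x, (0 <= u x)%R) ->
  Q.-integrable setT (EFin \o u) -> \int[Q]_x (u x)%:E = 1 ->
  (0 < c)%R -> measurable_fun setT h ->
  (forall t, (0 <= t)%R ->
     (c * Num.max (t - gam) 0)%:E <= h t - (c1 * (t - 1))%:E) ->
  \int[Q]_x (Num.max (u x - gam) 0)%:E * c%:E <= \int[Q]_x h (u x).
Proof.
move=> mu u0 iu Iu c0 mh hinge.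
set G := fun x => (c1 * (u x - 1))%R.
have i1 : Q.-integrable setT (EFin \o cst 1%R).
  exact: finite_measure_integrable_cst.
have iG : Q.-integrable setT (EFin \o G).
  apply: (eq_integrable measurableT
    (fun x => c1%:E * ((u x)%:E - (cst 1%R x)%:E))).
    by move=> x _; rewrite /G /= EFinM EFinB.
  by apply: integrableZl => //; exact: integrableB.
have IG : \int[Q]_x (G x)%:E = 0.
  under eq_integral do rewrite /G EFinM EFinB.
  rewrite integralZl //; last exact: (integrableB _ iu i1).
  rewrite integralB_EFin // Iu integral_cst //= probability_setT mul1e.
  by rewrite subee // mule0.
set K := fun x => h (u x) - (G x)%:E.
have mK : measurable_fun setT K.
  by apply: emeasurable_funB; [exact: measurableT_comp|exact: measurable_int iG].
have hinge_K x : (c * Num.max (u x - gam) 0)%:E <= K x by exact: hinge.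
have c_ge0 : (0 <= c)%R by exact: ltW.
have hinge_ge0 x : (0 <= c * Num.max (u x - gam) 0)%R.
  by rewrite mulr_ge0 // le_max lexx orbT.
have K0 x : 0 <= K x by apply: le_trans (hinge_K x); rewrite lee_fin.
have mhinge : measurable_fun setT (fun x => Num.max (u x - gam) 0)%R.
  by apply: measurable_maxr => //; exact: measurable_funB.
have -> : \int[Q]_x h (u x) = \int[Q]_x (K x + (G x)%:E).
  by apply: eq_integral => x _; rewrite /K subeK.
rewrite ge0_integralD_integrable // IG adde0.
apply: (@le_trans _ _ (\int[Q]_x (c * Num.max (u x - gam) 0)%:E)).
  under [X in _ <= X]eq_integral do rewrite EFinM.
  rewrite [X in X <= _]muleC ge0_integralZl //; first exact/measurable_EFinP.
  by move=> x _; rewrite lee_fin le_max lexx orbT.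
apply: ge0_le_integral => //.
  by move=> x _; rewrite lee_fin.
by apply/measurable_EFinP; exact: measurable_funM.
Qed.

End hinge_integral.

Section density.
Context {d : measure_display} {T : measurableType d} {R : realType}.
Context {P Q : probability T R}.
Hypothesis PQ : P `<< Q.
Local Open Scope ereal_scope.
Local Open Scope charge_scope.

Let PQ' : charge_of_finite_measure P `<< Q := PQ.

Lemma densE x : (dens P Q x)%:E = ('d (charge_of_finite_measure P) '/d Q) x.
Proof. by rewrite /dens fineK // Radon_Nikodym_fin_num. Qed.

Lemma integrable_dens : Q.-integrable setT (EFin \o dens P Q).
Proof.
apply: (eq_integrable measurableT _ _ _ (Radon_Nikodym_integrable PQ')).
by move=> x _; rewrite /= densE.
Qed.

Lemma measurable_dens : measurable_fun setT (dens P Q).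
Proof. exact/measurable_EFinP/(measurable_int _ integrable_dens). Qed.

Lemma integral_dens : \int[Q]_x (dens P Q x)%:E = 1.
Proof.
under eq_integral do rewrite densE.
by rewrite -(Radon_Nikodym_integral PQ' measurableT); exact: probability_setT.
Qed.

Lemma dens_ge0_ae : {ae Q, forall x, (0 <= dens P Q x)%R}.
Proof.
have := ae_eq_Radon_Nikodym_SigmaFinite PQ measurableT.
apply: filterS => x /(_ I) RNE; rewrite /dens fine_ge0 // -RNE.
exact: Radon_Nikodym_SigmaFinite.f_ge0.
Qed.

(* The density is nonnegative only Q-a.e.; its positive part is a version of
   it that is nonnegative everywhere. *)
Lemma integral_dens_maxr (h : R -> \bar R) : measurable_fun setT h ->
  \int[Q]_x h (dens P Q x) = \int[Q]_x h (Num.max (dens P Q x) 0%R).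
Proof.
move=> mh; apply: ae_eq_integral => //.
- exact: measurableT_comp mh measurable_dens.
- exact: measurableT_comp mh (measurable_maxr measurable_dens _).
by apply: filterS dens_ge0_ae => x d0 _; rewrite max_l.
Qed.

Lemma Egamma_le_fdiv {f : R -> R} {gam c c1 : R} : (0 < c)%R ->
  measurable_fun setT (fext f) ->
  (forall t, (0 <= t)%R ->
     (c * Num.max (t - gam) 0)%:E <= fext f t - (c1 * (t - 1))%:E) ->
  Egamma gam P Q <= fdiv f P Q * (c^-1)%:E.
Proof.
move=> c0 mf hinge; rewrite lee_pdivlMr //.
set u := fun x => Num.max (dens P Q x) 0%R.
have mu : measurable_fun setT u by exact: measurable_maxr measurable_dens _.
have u_ge0 x : (0 <= u x)%R by rewrite /u le_max lexx orbT.
have iu : Q.-integrable setT (EFin \o u).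
  apply: (le_integrable measurableT _ _ integrable_dens).
    exact/measurable_EFinP.
  move=> x _; rewrite /= lee_fin /u.
  by case: (leP (dens P Q x) 0%R); rewrite ?normr0.
have Iu : \int[Q]_x (u x)%:E = 1.
  by rewrite /u -(integral_dens_maxr EFin) ?integral_dens.
rewrite /Egamma /fdiv (integral_dens_maxr _ mf).
rewrite (integral_dens_maxr (fun t => (Num.max (t - gam) 0)%:E)).
  exact: hinge_integral_le mu u_ge0 iu Iu c0 mf hinge.
by apply/measurable_EFinP; apply: measurable_maxr => //; exact: measurable_funB.
Qed.

End density.

Theorem mainTheorem6 (d : measure_display) (T : measurableType d) (R : realType)
  (P Q : probability T R) (gamma : R) (f : R -> R) :
  P `<< Q ->
  1 < gamma ->
  convex_pos f ->
  f 1 = 0 ->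
  derivable f 1 1 ->
  derivable f gamma 1 ->
  derive1 f 1 < derive1 f gamma ->
  (Egamma gamma P Q <= fdiv f P Q * ((derive1 f gamma - derive1 f 1)^-1)%:E)%E /\
  (forall L : R, 0 < L ->
     (forall x, gamma <= x -> derivable f x 1) ->
     (forall x y, gamma <= x -> gamma <= y ->
        `|derive1 f x - derive1 f y| <= L * `|x - y|) ->
     let gamma0 := gamma + Num.sqrt (2 * (f gamma - derive1 f 1 * (gamma - 1)) / L) in
     (Egamma gamma P Q <= fdiv f P Q * ((derive1 f gamma0 - derive1 f 1)^-1)%:E)%E).
Proof.
move=> PQ gamma1 cf f1 fd1 fdg f'1_lt.
have gamma_gt0 : 0 < gamma := lt_trans ltr01 gamma1.
have mf := measurable_fext cf f1 fd1.
split.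
  apply: (Egamma_le_fdiv PQ _ mf (fext_hinge_le cf f1 fd1 gamma_gt0 _)).
    by rewrite subr_gt0.
  by move=> t; exact: derive1_hinge_le_gap.
move=> L L0 fd lip /=; set del := Num.sqrt _.
have gap_gamma := gap_ge0 cf f1 fd1 gamma_gt0.
have gamma_le : gamma <= gamma + del by rewrite lerDl sqrtr_ge0.
have f'_le := convex_pos_derive1_le cf gamma_gt0 gamma_le fdg (fd _ gamma_le).
apply: (Egamma_le_fdiv PQ _ mf (fext_hinge_le cf f1 fd1 gamma_gt0 _)).
  by rewrite subr_gt0 (lt_le_trans f'1_lt f'_le).
move=> t.
apply: (lipschitz_hinge_le_gap cf gamma_gt0 (ltW L0) (sqrtr_ge0 _) _ fd lip).
exact: half_mul_sqr_sqrt gap_gamma L0.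
Qed.
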